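(* Let $V$ be an Archimedean linear lattice and let $(\mathcal{R}, S, V)$ be a $V$-complete vector $S$-metric space. Let $p, q, k:\mathcal{R}\to\mathcal{R}$ be maps satisfying: (i) for all $\xi,\gamma\in\mathcal{R}$, $$S(p\xi,p\xi,q\gamma)\preceq h_1 S(k\xi,k\xi,k\gamma)+h_2 S(p\xi,p\xi,k\xi)+h_3 S(q\gamma,q\gamma,k\gamma)+h_4 S(p\xi,p\xi,k\gamma)+h_5 S(q\gamma,q\gamma,k\xi),$$ where $h_1,\dots,h_5$ are positive real constants with $2h_1+2h_2+2h_3+4h_4+4h_5<1$; (ii) $p(\mathcal{R})\cup q(\mathcal{R})\subset k(\mathcal{R})$; (iii) one of $p(\mathcal{R})$, $q(\mathcal{R})$ or $k(\mathcal{R})$ is a $V$-complete subspace of $\mathcal{R}$. Then the pairs $\{p,k\}$ and $\{q,k\}$ have a unique point of coincidence in $\mathcal{R}$. If moreover $\{p,k\}$ and $\{q,k\}$ are weakly compatible, then $p$, $q$ and $k$ have a unique common fixed point in $\mathcal{R}$.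
   Context: An ordered linear space is a real vector space $V$ with a partial order $\preceq$ such that $x\preceq y$ implies $x+z\preceq y+z$ and $\omega x\preceq \omega y$ for all $z\in V$, $\omega>0$. A linear lattice (Riesz space) is an ordered linear space in which every two-element set has a supremum and an infimum. Write $V^+=\{x\in V: x\succeq 0\}$; for a sequence $\langle\mu_n\rangle$ in $V$, $\mu_n\downarrow 0$ means $\mu_n$ is decreasing with infimum $0$. $V$ is Archimedean if $\frac1n x\downarrow 0$ for every $x\in V^+$. A vector $S$-metric on a nonempty set $\mathcal{R}$ is a map $S:\mathcal{R}\times\mathcal{R}\times\mathcal{R}\to V$ such that for all $x,y,z,a\in\mathcal{R}$: (a) $S(x,y,z)\succeq 0$; (b) $S(x,y,z)=0$ iff $x=y=z$; (c) $S(x,y,z)\preceq S(x,x,a)+S(y,y,a)+S(z,z,a)$. Then $(\mathcal{R},S,V)$ is a vector $S$-metric space. A sequence $\langle x_n\rangle$ in $\mathcal{R}$ $V$-converges to $x\in\mathcal{R}$ if there is a sequence $\mu_n\downarrow 0$ in $V$ with $S(x_n,x_n,x)\preceq \mu_n$ for all $n$; it is $V$-Cauchy if there is $\mu_n\downarrow0$ in $V$ with $S(x_n,x_n,x_{n+q})\preceq\mu_n$ for all $n,q$. The space (or a subset) is $V$-complete if every $V$-Cauchy sequence in it $V$-converges to a limit in it. For maps $f,g:\mathcal{R}\to\mathcal{R}$, a point $x$ with $fx=gx=y$ is a coincidence point and $y$ is a point of coincidence of $f$ and $g$; $f,g$ are weakly compatible if $fgx=gfx$ whenever $fx=gx$.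 A common fixed point of several maps is a point fixed by all of them. *)

From mathcomp Require Import all_boot all_order all_algebra.
From mathcomp Require Import boolp classical_sets reals.
Set Implicit Arguments. Unset Strict Implicit. Unset Printing Implicit Defensive.
Import Order.TTheory GRing.Theory Num.Theory.
Local Open Scope ring_scope.
Local Open Scope classical_set_scope.

Section OrderedSpace.
Variables (R : realType) (V : lmodType R) (le : V -> V -> Prop).

Definition ordered_linear_space : Prop :=
  [/\ (forall x, le x x),
      (forall x y, le x y -> le y x -> x = y),
      (forall x y z, le x y -> le y z -> le x z),
      (forall x y z, le x y -> le (x + z) (y + z)) &
      (forall (w : R) x y, 0 < w -> le x y -> le (w *: x) (w *: y))].

Definition is_sup (A : set V) (s : V) : Prop :=
  (forall a, A a -> le a s) /\ (forall u, (forall a, A a -> le a u) -> le s u).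
Definition is_inf (A : set V) (i : V) : Prop :=
  (forall a, A a -> le i a) /\ (forall u, (forall a, A a -> le u a) -> le u i).

Definition linear_lattice : Prop :=
  ordered_linear_space /\
  (forall x y : V, (exists s, is_sup [set x; y] s) /\ (exists i, is_inf [set x; y] i)).

Definition decr_to0 (mu : nat -> V) : Prop :=
  (forall n, le (mu n.+1) (mu n)) /\ is_inf (range mu) 0.

Definition archimedean_space : Prop :=
  forall x, le 0 x -> decr_to0 (fun n => (n.+1%:R)^-1 *: x).

Variable X : Type.

Definition vector_S_metric (S : X -> X -> X -> V) : Prop :=
  [/\ (forall x y z, le 0 (S x y z)),
      (forall x y z, S x y z = 0 <-> (x = y /\ y = z)) &
      (forall x y z a, le (S x y z) (S x x a + S y y a + S z z a))].

Definition V_converges (S : X -> X -> X -> V) (x : nat -> X) (l : X) : Prop :=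
  exists mu, decr_to0 mu /\ forall n, le (S (x n) (x n) l) (mu n).

Definition V_Cauchy (S : X -> X -> X -> V) (x : nat -> X) : Prop :=
  exists mu, decr_to0 mu /\ forall n q, le (S (x n) (x n) (x (n + q)%N)) (mu n).

Definition V_complete_subset (S : X -> X -> X -> V) (A : set X) : Prop :=
  forall x : nat -> X, (forall n, A (x n)) -> V_Cauchy S x ->
    exists2 l, A l & V_converges S x l.

Definition V_complete (S : X -> X -> X -> V) : Prop :=
  V_complete_subset S setT.

End OrderedSpace.

Definition point_of_coincidence (X : Type) (f g : X -> X) (y : X) : Prop :=
  exists x, f x = y /\ g x = y.

Definition weakly_compatible (X : Type) (f g : X -> X) : Prop :=
  forall x, f x = g x -> f (g x) = g (f x).

(* Jungck iteration.  As p(X) and q(X) lie in k(X), there are x_n with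
   k x_(n+1) = p x_n for even n and k x_(n+1) = q x_n for odd n.  For
   y_n = k x_(n+1), condition (i) and the S-metric triangle inequality
   S(x,x,z) <= 2 S(x,x,y) + S(y,y,z) give
   S(y_(n+1),y_(n+1),y_(n+2)) <= lam S(y_n,y_n,y_(n+1)) with
   lam = h1+h2+h3+3h4+3h5 < 1, so S(y_n,y_n,y_(n+m)) <= 2 lam^n/(1-lam) S(y_0,y_0,y_1),
   which decreases to 0 because V is Archimedean: y is V-Cauchy.  By
   completeness of one of the three ranges its limit is z = k u.  Condition
   (i) at (u, x_(2n+1)) bounds S(pu,pu,z) by (2h2+4h4) S(pu,pu,z) plus terms
   decreasing to 0, so p u = z, and (i) at (u,u) then gives q u = z.  Applied
   to two points of coincidence, (i) shows that they are equal; with weak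
   compatibility, p z = p (k u) = k (p u) = k z is again a point of
   coincidence, hence z is the common fixed point. *)

From mathcomp Require Import all_boot all_order all_algebra.
From mathcomp Require Import boolp classical_sets reals topology normedtype sequences.
From mathcomp Require Import ring lra.
Import Order.TTheory GRing.Theory Num.Theory.
Local Open Scope ring_scope.
Local Open Scope classical_set_scope.
Set Implicit Arguments. Unset Strict Implicit. Unset Printing Implicit Defensive.

Lemma exists_exprn_le (R : realType) (l eps : R) :
  0 <= l -> l < 1 -> 0 < eps -> exists n, l ^+ n <= eps.
Proof.
move=> l0 l1 eps0; have Nl1 : `|l| < 1 by rewrite ger0_norm.
have [N _ leN] := @cvgr0_norm_le R R^o _ _ _ _ (cvg_expr Nl1) _ eps0.
by exists N; have := leN N (leqnn N); rewrite /= ger0_norm ?exprn_ge0.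
Qed.

Lemma jungck_sequence (X : Type) (p q k : X -> X) (x0 : X) :
  range p `|` range q `<=` range k ->
  exists x : nat -> X, forall n, k (x n.+1) = (if odd n then q else p) (x n).
Proof.
move=> pqk.
have /choice[gp gpE] : forall t, exists s, k s = p t.
  by move=> t; have [|s _ ks] := pqk (p t); [left; exists t | exists s].
have /choice[gq gqE] : forall t, exists s, k s = q t.
  by move=> t; have [|s _ ks] := pqk (q t); [right; exists t | exists s].
exists (fix x n := if n is m.+1 then (if odd m then gq else gp) (x m) else x0).
by move=> n /=; case: (odd n).
Qed.

Section OrderedLinearSpace.
Variables (R : realType) (V : lmodType R) (le : V -> V -> Prop).
Hypothesis ols : ordered_linear_space le.
Local Notation "x ⪯ y" := (le x y) (at level 70, no associativity).

Lemma ole_refl x : x ⪯ x.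
Proof. by case: ols. Qed.

Lemma ole_anti x y : x ⪯ y -> y ⪯ x -> x = y.
Proof. by case: ols => _ anti _ _ _; apply: anti. Qed.

Lemma ole_trans y x z : x ⪯ y -> y ⪯ z -> x ⪯ z.
Proof. by case: ols => _ _ trans _ _; apply: trans. Qed.

Lemma oleD2r z x y : x ⪯ y -> x + z ⪯ y + z.
Proof. by case: ols => _ _ _ addr _; apply: addr. Qed.

Lemma oleD2l z x y : x ⪯ y -> z + x ⪯ z + y.
Proof. by rewrite ![z + _]addrC; apply: oleD2r. Qed.

Lemma oleD x y x' y' : x ⪯ y -> x' ⪯ y' -> x + x' ⪯ y + y'.
Proof. by move=> /(oleD2r x') xy /(oleD2l y); apply: ole_trans xy. Qed.

Lemma oleBlDr x y z : x - y ⪯ z <-> x ⪯ z + y.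
Proof.
split; first by move/(oleD2r y); rewrite subrK.
by move/(oleD2r (- y)); rewrite addrK.
Qed.

Lemma oleZ2l (w : R) x y : 0 <= w -> x ⪯ y -> w *: x ⪯ w *: y.
Proof.
rewrite le0r => /orP[/eqP-> _|w0]; first by rewrite !scale0r; apply: ole_refl.
by case: ols => _ _ _ _; apply.
Qed.

Lemma oscaler_ge0 (w : R) x : 0 <= w -> 0 ⪯ x -> 0 ⪯ w *: x.
Proof. by move=> w0 /(oleZ2l w0); rewrite scaler0. Qed.

Lemma oleZ2r (a b : R) x : 0 ⪯ x -> a <= b -> a *: x ⪯ b *: x.
Proof.
move=> x0; rewrite -subr_ge0 => /oscaler_ge0/(_ x0)/(oleD2l (a *: x)).
by rewrite addr0 -scalerDl subrKC.
Qed.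

Lemma ole_absorb (b : R) x y : b < 1 -> x ⪯ b *: x + y -> x ⪯ (1 - b)^-1 *: y.
Proof.
move=> b1; have b1' : 1 - b != 0 by rewrite subr_eq0 gt_eqF.
have bi : 0 <= (1 - b)^-1 by rewrite invr_ge0 subr_ge0 ltW.
move/(oleD2r (- (b *: x))); rewrite addrAC subrr add0r -{1}[x]scale1r -scalerBl.
by move/(oleZ2l bi); rewrite scalerA mulVf ?scale1r.
Qed.

Lemma ole_absorb_eq0 (b : R) x : b < 1 -> 0 ⪯ x -> x ⪯ b *: x -> x = 0.
Proof.
move=> b1 x0; rewrite -[b *: x]addr0 => /(ole_absorb b1).
by rewrite scaler0 => /ole_anti; apply.
Qed.

Lemma ole_absorb_scale (a b lam : R) x y :
  0 <= b -> b < 1 -> a + b <= lam -> lam <= 1 ->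
  0 ⪯ x -> y ⪯ a *: x + b *: y -> y ⪯ lam *: x.
Proof.
move=> b0 b1 ab_lam lam1 x0; rewrite addrC => /(ole_absorb b1).
move/ole_trans; apply; rewrite scalerA; apply: oleZ2r => //.
by rewrite mulrC ler_pdivrMr ?subr_gt0 //; nra.
Qed.

Lemma decr_to0P mu : decr_to0 le mu <->
  [/\ forall n, mu n.+1 ⪯ mu n, forall n, 0 ⪯ mu n &
      forall x, (forall n, x ⪯ mu n) -> x ⪯ 0].
Proof.
split=> [[decr [lb glb]] | [decr ge0 lb0]].
  by split=> // [n | x lbx]; [apply: lb; exists n | apply: glb => _ [n _ <-]].
by split=> //; split=> [_ [n _ <-] // | x lbx]; apply: lb0 => n; apply: lbx; exists n.
Qed.

Lemma decr_to0_ge0 mu n : decr_to0 le mu -> 0 ⪯ mu n.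
Proof. by case/decr_to0P. Qed.

Lemma decr_to0_lb mu x : decr_to0 le mu -> (forall n, x ⪯ mu n) -> x ⪯ 0.
Proof. by case/decr_to0P => _ _; apply. Qed.

Lemma decr_to0_homo mu m n : decr_to0 le mu -> (m <= n)%N -> mu n ⪯ mu m.
Proof.
case/decr_to0P=> decr _ _ /subnK <-; elim: (n - m)%N => [|i IH]; first exact: ole_refl.
by apply: ole_trans (decr _) IH.
Qed.

Lemma decr_to0D mu nu : decr_to0 le mu -> decr_to0 le nu ->
  decr_to0 le (fun n => mu n + nu n).
Proof.
move=> dmu dnu; apply/decr_to0P; split=> [n | n | x lb].
- by apply: oleD; apply: decr_to0_homo.
- by rewrite -[0]addr0; apply: oleD; apply: decr_to0_ge0.
apply: (decr_to0_lb dnu) => m; rewrite -[nu m]add0r -oleBlDr.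
apply: (decr_to0_lb dmu) => n; rewrite oleBlDr.
apply: ole_trans (lb (maxn n m)) _.
by apply: oleD; apply: decr_to0_homo; rewrite ?leq_maxl ?leq_maxr.
Qed.

Lemma decr_to0Z (w : R) mu : 0 <= w -> decr_to0 le mu ->
  decr_to0 le (fun n => w *: mu n).
Proof.
rewrite le0r => /orP[/eqP-> _ | w0 dmu]; apply/decr_to0P.
  by split=> [n | n | x /(_ 0%N)]; rewrite ?scale0r //; apply: ole_refl.
split=> [n | n | x lb].
- by apply: oleZ2l (ltW w0) _; apply: decr_to0_homo.
- exact: oscaler_ge0 (ltW w0) (decr_to0_ge0 _ dmu).
have w0' : 0 <= w^-1 by rewrite invr_ge0 ltW.
suff : w^-1 *: x ⪯ 0 by move/(oleZ2l (ltW w0)); rewrite scalerA divff ?gt_eqF // scale1r scaler0.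
apply: (decr_to0_lb dmu) => n.
by have := oleZ2l w0' (lb n); rewrite scalerA mulVf ?gt_eqF // scale1r.
Qed.

Lemma decr_to0_comp mu f : decr_to0 le mu ->
  {homo f : m n / (m <= n)%N} -> (forall n, n <= f n)%N -> decr_to0 le (mu \o f).
Proof.
move=> dmu f_homo f_ge; apply/decr_to0P; split=> [n | n | x lb] /=.
- by apply: decr_to0_homo dmu _; apply: f_homo.
- exact: decr_to0_ge0 _ dmu.
apply: (decr_to0_lb dmu) => n.
exact: ole_trans (lb n) (decr_to0_homo dmu (f_ge n)).
Qed.

Lemma decr_to0_geometric (l : R) x : archimedean_space le ->
  0 <= l -> l < 1 -> 0 ⪯ x -> decr_to0 le (fun n => l ^+ n *: x).
Proof.
move=> arch l0 l1 x0; apply/decr_to0P; split=> [n | n | y lb].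
- by apply: oleZ2r => //; rewrite exprS ler_piMl ?exprn_ge0 // ltW.
- by apply: oscaler_ge0 => //; rewrite exprn_ge0.
apply: (decr_to0_lb (arch x x0)) => m.
have [n ln] := @exists_exprn_le _ l (m.+1%:R)^-1 l0 l1 (ltac:(by rewrite invr_gt0)).
exact: ole_trans (lb n) (oleZ2r x0 ln).
Qed.

Definition order_null (e : nat -> V) : Prop :=
  exists mu, decr_to0 le mu /\ forall n, e n ⪯ mu n.

Lemma order_null_le e e' : order_null e' -> (forall n, e n ⪯ e' n) -> order_null e.
Proof. by move=> [mu [dmu le_e'_mu]] le_e_e'; exists mu; split=> // n; apply: ole_trans (le_e'_mu n). Qed.

Lemma order_nullD e e' : order_null e -> order_null e' -> order_null (fun n => e n + e' n).
Proof.
move=> [mu [dmu le_e]] [nu [dnu le_e']]; exists (fun n => mu n + nu n).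
by split=> [|n]; [apply: decr_to0D | apply: oleD].
Qed.

Lemma order_nullZ (w : R) e : 0 <= w -> order_null e -> order_null (fun n => w *: e n).
Proof.
move=> w0 [mu [dmu le_e]]; exists (fun n => w *: mu n).
by split=> [|n]; [apply: decr_to0Z | apply: oleZ2l].
Qed.

Lemma order_null_comp e f : order_null e ->
  {homo f : m n / (m <= n)%N} -> (forall n, n <= f n)%N -> order_null (e \o f).
Proof.
move=> [mu [dmu le_e]] f_homo f_ge; exists (mu \o f).
by split=> [|n]; [apply: decr_to0_comp | apply: le_e].
Qed.

Lemma order_null_lb e x : order_null e -> (forall n, x ⪯ e n) -> x ⪯ 0.
Proof. by move=> [mu [dmu le_e]] lb; apply: (decr_to0_lb dmu) => n; apply: ole_trans (le_e n). Qed.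

Lemma order_null_absorb_eq0 (b : R) x e : b < 1 -> 0 ⪯ x ->
  (forall n, x ⪯ b *: x + e n) -> order_null e -> x = 0.
Proof.
move=> b1 x0 le_x null_e; apply: ole_anti x0.
have bi : 0 <= (1 - b)^-1 by rewrite invr_ge0 subr_ge0 ltW.
by apply: order_null_lb (order_nullZ bi null_e) _ => n; apply: ole_absorb.
Qed.

Section VectorSMetric.
Variables (X : Type) (S : X -> X -> X -> V).
Hypothesis HS : vector_S_metric le S.

Lemma S_ge0 x y z : 0 ⪯ S x y z.
Proof. by case: HS. Qed.

Lemma S_refl x : S x x x = 0.
Proof. by case: HS => _ S0 _; apply/S0. Qed.

Lemma S_eq0 x y : S x x y = 0 -> x = y.
Proof. by case: HS => _ S0 _ /S0[]. Qed.

Lemma S_sym x y : S x x y = S y y x.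
Proof.
suff le_S a b : S a a b ⪯ S b b a by apply: ole_anti.
by case: HS => _ _ /(_ a a b a); rewrite S_refl !add0r.
Qed.

Lemma S_triangle x y z : S x x z ⪯ S x x y + S x x y + S y y z.
Proof. by case: HS => _ _ /(_ x x z y); rewrite (S_sym z y). Qed.

Lemma V_converges_unique y l l' :
  V_converges le S y l -> V_converges le S y l' -> l = l'.
Proof.
move=> yl yl'; apply/S_eq0/ole_anti/S_ge0.
apply: (order_null_lb (order_nullD (order_nullD yl yl) yl')) => n /=.
by have := S_triangle l (y n) l'; rewrite (S_sym l (y n)).
Qed.

Lemma V_converges_comp y l f : V_converges le S y l ->
  {homo f : m n / (m <= n)%N} -> (forall n, n <= f n)%N -> V_converges le S (y \o f) l.
Proof. exact: order_null_comp. Qed.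

Lemma V_Cauchy_comp y f : V_Cauchy le S y ->
  {homo f : m n / (m <= n)%N} -> (forall n, n <= f n)%N -> V_Cauchy le S (y \o f).
Proof.
move=> [mu [dmu Cy]] f_homo f_ge; exists (mu \o f); split; first exact: decr_to0_comp.
move=> n m /=; have := Cy (f n) (f (n + m)%N - f n)%N.
by rewrite subnKC // f_homo // leq_addr.
Qed.

Lemma V_complete_subset_limit (A : set X) y l f :
  V_complete_subset le S A -> V_Cauchy le S y -> V_converges le S y l ->
  {homo f : m n / (m <= n)%N} -> (forall n, n <= f n)%N ->
  (forall n, A (y (f n))) -> A l.
Proof.
move=> complA Cy yl f_homo f_ge fA.
have [l' Al' yfl'] := complA _ fA (V_Cauchy_comp Cy f_homo f_ge).
by rewrite (V_converges_unique (V_converges_comp yl f_homo f_ge) yfl').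
Qed.

Lemma V_Cauchy_of_contraction (lam : R) y : archimedean_space le ->
  0 <= lam -> lam < 1 ->
  (forall n, S (y n.+1) (y n.+1) (y n.+2) ⪯ lam *: S (y n) (y n) (y n.+1)) ->
  V_Cauchy le S y.
Proof.
move=> arch lam0 lam1 step; set d0 := S (y 0%N) (y 0%N) (y 1%N).
have dist_succ n : S (y n) (y n) (y n.+1) ⪯ lam ^+ n *: d0.
  elim: n => [|n IH]; first by rewrite expr0 scale1r; apply: ole_refl.
  by apply: ole_trans (step n) _; rewrite exprS -scalerA; apply: oleZ2l.
pose c := 2 / (1 - lam).
have c0 : 0 <= c by rewrite divr_ge0 // subr_ge0 ltW.
have dist n m : S (y n) (y n) (y (n + m)%N) ⪯ c *: (lam ^+ n *: d0).
  elim: m n => [|m IH] n.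
    by rewrite addn0 S_refl; apply/oscaler_ge0/oscaler_ge0/S_ge0; rewrite ?exprn_ge0.
  apply: ole_trans (S_triangle _ (y n.+1) _) _; rewrite addnS -addSn.
  apply: ole_trans (oleD (oleD (dist_succ n) (dist_succ n)) (IH n.+1)) _.
  rewrite !scalerA -!scalerDl.
  have -> : lam ^+ n + lam ^+ n + c * lam ^+ n.+1 = c * lam ^+ n.
    by rewrite exprS /c; field; rewrite subr_eq0 gt_eqF.
  exact: ole_refl.
exists (fun n => c *: (lam ^+ n *: d0)); split=> //.
by apply: decr_to0Z c0 (decr_to0_geometric arch lam0 lam1 (S_ge0 _ _ _)).
Qed.

Section Contractive.
Variables (p q k : X -> X) (h1 h2 h3 h4 h5 : R).
Hypotheses (h1_ge0 : 0 <= h1) (h2_ge0 : 0 <= h2) (h3_ge0 : 0 <= h3)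
  (h4_ge0 : 0 <= h4) (h5_ge0 : 0 <= h5).
Hypothesis h_small : 2 * h1 + 2 * h2 + 2 * h3 + 4 * h4 + 4 * h5 < 1.
Hypothesis contractive : forall xi ga : X,
  S (p xi) (p xi) (q ga) ⪯
    h1 *: S (k xi) (k xi) (k ga) + h2 *: S (p xi) (p xi) (k xi)
    + h3 *: S (q ga) (q ga) (k ga) + h4 *: S (p xi) (p xi) (k ga)
    + h5 *: S (q ga) (q ga) (k xi).

(* Dominates the contraction factors h1+h2+h3+3h5 and h1+h2+h3+3h4 of the
   two parities of the Jungck sequence. *)
Let lam := h1 + h2 + h3 + 3 * h4 + 3 * h5.

(* lra ignores section hypotheses, so they are reverted first. *)
Local Ltac coef_lra :=
  move: h1_ge0 h2_ge0 h3_ge0 h4_ge0 h5_ge0 h_small; rewrite /lam; lra.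

Lemma contraction_pq u v : k v = p u ->
  S (p u) (p u) (q v) ⪯ lam *: S (k u) (k u) (p u).
Proof.
move=> kv; apply: (@ole_absorb_scale (h1 + h2 + h5) (h3 + h5 + h5));
  [coef_lra.. | exact: S_ge0 |].
have le_S_qv_ku : S (q v) (q v) (k u) ⪯
    S (p u) (p u) (q v) + S (p u) (p u) (q v) + S (k u) (k u) (p u).
  by have := S_triangle (q v) (p u) (k u); rewrite (S_sym (q v) (p u)) (S_sym (p u) (k u)).
have := contractive u v; rewrite kv S_refl scaler0 addr0.
rewrite (S_sym (p u) (k u)) (S_sym (q v) (p u)) => /ole_trans; apply.
apply: ole_trans (oleD2l _ (oleZ2l h5_ge0 le_S_qv_ku)) _.
rewrite !scalerDr !scalerDl !addrA [X in X ⪯ _](ACl ((1*2*6)*(3*4*5))) /= !addrA.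
exact: ole_refl.
Qed.

Lemma contraction_qp u v : k v = q u ->
  S (q u) (q u) (p v) ⪯ lam *: S (k u) (k u) (q u).
Proof.
move=> kv; apply: (@ole_absorb_scale (h1 + h3 + h4) (h2 + h4 + h4));
  [coef_lra.. | exact: S_ge0 |].
have le_S_pv_ku : S (p v) (p v) (k u) ⪯
    S (q u) (q u) (p v) + S (q u) (q u) (p v) + S (k u) (k u) (q u).
  by have := S_triangle (p v) (q u) (k u); rewrite (S_sym (p v) (q u)) (S_sym (q u) (k u)).
have := contractive v u; rewrite kv S_refl scaler0 addr0.
rewrite (S_sym (q u) (k u)) (S_sym (p v) (q u)) => /ole_trans; apply.
apply: ole_trans (oleD2l _ (oleZ2l h4_ge0 le_S_pv_ku)) _.
rewrite !scalerDr !scalerDl !addrA [X in X ⪯ _](ACl ((1*3*6)*(2*4*5))) /= !addrA.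
exact: ole_refl.
Qed.

Lemma points_of_coincidence_eq w w' :
  point_of_coincidence p k w -> point_of_coincidence q k w' -> w = w'.
Proof.
move=> [u [<- ku]] [v [<- kv]].
apply/S_eq0/(@ole_absorb_eq0 (h1 + h4 + h5)); [coef_lra | exact: S_ge0 |].
have := contractive u v; rewrite ku kv !S_refl !scaler0 !addr0 (S_sym (q v) (p u)).
by rewrite -!scalerDl.
Qed.

Lemma coincidence_p_q u : p u = k u -> q u = k u.
Proof.
move=> pu; apply/esym/S_eq0/(@ole_absorb_eq0 (h3 + h5)); [coef_lra | exact: S_ge0 |].
have := contractive u u; rewrite pu !S_refl !scaler0 !add0r addr0 (S_sym (q u) (k u)).
by rewrite -scalerDl.
Qed.

Lemma coincidence_of_limit (s : nat -> X) z u :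
  V_converges le S (k \o s) z -> V_converges le S (q \o s) z -> k u = z -> p u = z.
Proof.
move=> ksz qsz kuz.
have null_kz : order_null (fun n => S (k (s n)) (k (s n)) z) := ksz.
have null_qz : order_null (fun n => S (q (s n)) (q (s n)) z) := qsz.
pose f n := h1 *: S z z (k (s n)) + h3 *: S (q (s n)) (q (s n)) (k (s n))
  + h4 *: S z z (k (s n)) + h5 *: S (q (s n)) (q (s n)) z.
have null_zk : order_null (fun n => S z z (k (s n))).
  by apply: (order_null_le null_kz) => n; rewrite (S_sym z); apply: ole_refl.
have null_qk : order_null (fun n => S (q (s n)) (q (s n)) (k (s n))).
  by apply: order_null_le (order_nullD (order_nullD null_qz null_qz) null_zk) _ => n; apply: S_triangle.
have null_f : order_null f.
  apply: order_nullD (order_nullZ h5_ge0 null_qz).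
  apply: order_nullD (order_nullZ h4_ge0 null_zk).
  exact: order_nullD (order_nullZ h1_ge0 null_zk) (order_nullZ h3_ge0 null_qk).
set D := S (p u) (p u) z.
have le_pu_qs n : S (p u) (p u) (q (s n)) ⪯ (h2 + h4 + h4) *: D + f n.
  have := contractive u (s n); rewrite kuz => /ole_trans; apply.
  apply: ole_trans (oleD2r _ (oleD2l _ (oleZ2l h4_ge0 (S_triangle _ z _)))) _.
  rewrite /f !scalerDr !scalerDl !addrA.
  by rewrite [X in X ⪯ _](ACl ((2*4*5)*(1*3*6*7))) /= !addrA; apply: ole_refl.
apply/S_eq0/(@order_null_absorb_eq0 ((h2 + h4 + h4) + (h2 + h4 + h4)) _
  (fun n => f n + f n + S (q (s n)) (q (s n)) z)); [coef_lra | exact: S_ge0 | | ].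
- move=> n; apply: ole_trans (S_triangle _ (q (s n)) _) _.
  apply: ole_trans (oleD2r _ (oleD (le_pu_qs n) (le_pu_qs n))) _.
  by rewrite addrACA -scalerDl !addrA; apply: ole_refl.
- exact: order_nullD (order_nullD null_f null_f) null_qz.
Qed.

Section JungckSequence.
Variable x : nat -> X.
Hypothesis xE : forall n, k (x n.+1) = (if odd n then q else p) (x n).
Local Notation y n := (k (x n.+1)).

Lemma jungck_step n : S (y n.+1) (y n.+1) (y n.+2) ⪯ lam *: S (y n) (y n) (y n.+1).
Proof.
case odd_n: (odd n); rewrite (xE n.+1) (xE n.+2) /= odd_n /=.
- by apply: contraction_pq; rewrite xE /= odd_n.
- by apply: contraction_qp; rewrite xE /= odd_n.
Qed.

Hypothesis arch : archimedean_space le.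

Lemma jungck_Cauchy : V_Cauchy le S (fun n => y n).
Proof. by apply: (V_Cauchy_of_contraction arch _ _ jungck_step); coef_lra. Qed.

Lemma jungck_limit_in_range z :
  range p `|` range q `<=` range k ->
  V_complete_subset le S (range p) \/ V_complete_subset le S (range q)
    \/ V_complete_subset le S (range k) ->
  V_converges le S (fun n => y n) z -> range k z.
Proof.
move=> pqk compl yz.
have double_homo : {homo double : m n / (m <= n)%N} by move=> m n; rewrite leq_double.
have double_ge n : (n <= n.*2)%N by rewrite -addnn leq_addr.
case: compl => [cp | [cq | ck]].
- apply: pqk; left; apply: (V_complete_subset_limit cp jungck_Cauchy yz double_homo double_ge).
  by move=> n; exists (x n.*2); rewrite //= xE odd_double.
- apply: pqk; right.
  apply: (V_complete_subset_limit cq jungck_Cauchy yz (f := fun n => n.*2.+1)) => [m n|n|n] /=.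
  + by rewrite ltnS leq_double.
  + exact: leqW.
  + by exists (x n.*2.+1); rewrite //= xE /= odd_double.
- by apply: (V_complete_subset_limit ck jungck_Cauchy yz (f := id)) => // n; exists (x n.+1).
Qed.

Lemma jungck_limit_coincidence z u :
  V_converges le S (fun n => y n) z -> k u = z -> p u = z.
Proof.
move=> yz; apply: (coincidence_of_limit (s := fun n => x n.*2.+1)).
- by apply: (V_converges_comp yz (f := double)) => [m n|n]; rewrite ?leq_double // -addnn leq_addr.
- have -> : q \o (fun n => x n.*2.+1) = (fun n => y n) \o (fun n => n.*2.+1).
    by apply: funext => n /=; rewrite xE /= odd_double.
  apply: (V_converges_comp yz) => [m n|n]; first by rewrite ltnS leq_double.
  by rewrite leqW // -addnn leq_addr.
Qed.

End JungckSequence.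

Lemma common_coincidence_point :
  inhabited X -> archimedean_space le -> V_complete le S ->
  range p `|` range q `<=` range k ->
  V_complete_subset le S (range p) \/ V_complete_subset le S (range q)
    \/ V_complete_subset le S (range k) ->
  exists u, p u = k u /\ q u = k u.
Proof.
move=> [x0] arch complete pqk compl.
have [x xE] := jungck_sequence x0 pqk.
have [z _ yz] := complete _ (fun _ => I) (jungck_Cauchy xE arch).
have [u _ kuz] := jungck_limit_in_range xE arch pqk compl yz.
have puk : p u = k u by rewrite kuz (jungck_limit_coincidence xE yz kuz).
by exists u; split; last exact: coincidence_p_q.
Qed.

End Contractive.
End VectorSMetric.
End OrderedLinearSpace.

Theorem theorem3p1 (R : realType) (V : lmodType R) (le : V -> V -> Prop)
  (X : Type) (S : X -> X -> X -> V) (p q k : X -> X)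
  (h1 h2 h3 h4 h5 : R) :
  inhabited X ->
  linear_lattice le -> archimedean_space le ->
  vector_S_metric le S -> V_complete le S ->
  0 < h1 -> 0 < h2 -> 0 < h3 -> 0 < h4 -> 0 < h5 ->
  2 * h1 + 2 * h2 + 2 * h3 + 4 * h4 + 4 * h5 < 1 ->
  (forall xi ga : X,
     le (S (p xi) (p xi) (q ga))
        (h1 *: S (k xi) (k xi) (k ga) + h2 *: S (p xi) (p xi) (k xi)
         + h3 *: S (q ga) (q ga) (k ga) + h4 *: S (p xi) (p xi) (k ga)
         + h5 *: S (q ga) (q ga) (k xi))) ->
  (range p `|` range q `<=` range k) ->
  (V_complete_subset le S (range p) \/ V_complete_subset le S (range q)
   \/ V_complete_subset le S (range k)) ->
  (exists w : X,
     (point_of_coincidence p k w /\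
      forall w', point_of_coincidence p k w' -> w' = w) /\
     (point_of_coincidence q k w /\
      forall w', point_of_coincidence q k w' -> w' = w)) /\
  (weakly_compatible p k -> weakly_compatible q k ->
   exists! z : X, p z = z /\ q z = z /\ k z = z).
Proof.
move=> X0 [ols _] arch HS complete /ltW h1_ge0 /ltW h2_ge0 /ltW h3_ge0 /ltW h4_ge0
  /ltW h5_ge0 h_small contr pqk compl.
have poc_eq := points_of_coincidence_eq ols HS h1_ge0 h2_ge0 h3_ge0 h4_ge0 h5_ge0 h_small contr.
have [u [puk quk]] := common_coincidence_point ols HS h1_ge0 h2_ge0 h3_ge0 h4_ge0 h5_ge0
  h_small contr X0 arch complete pqk compl.
have poc_p : point_of_coincidence p k (k u) by exists u.
have poc_q : point_of_coincidence q k (k u) by exists u.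
split.
  exists (k u); split; split=> // w.
  - by move/poc_eq; apply.
  - by move/(poc_eq _ _ poc_p)/esym.
move=> wc_pk _.
have pkz : p (k u) = k (k u) by rewrite wc_pk // puk.
have pz : p (k u) = k u by apply: poc_eq poc_q; exists (k u).
have kz : k (k u) = k u by rewrite -pkz.
have qz := coincidence_p_q ols HS h1_ge0 h2_ge0 h3_ge0 h4_ge0 h5_ge0 h_small contr pkz.
exists (k u); split; first by rewrite qz kz.
move=> t [pt [qt kt]]; apply: esym; apply: poc_eq poc_q.
by exists t.
Qed.
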